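(* Let PS1 and PS2 be two pure strategies (transition matrices $P_1$, $P_2$ on the finite population set $\mathcal{S}$, as described in the context), where the expected hitting time $m_{PS1}(X)$ of PS1 is finite for every $X\in\mathcal{S}$. Then the following are equivalent: (i) PS2 is complementary to PS1, i.e. there exists $X\in\mathcal{S}_{\mathrm{non}}$ with $\Delta_{PS1}(X)<\Delta_{PS2}(X)$; (ii) there exists a mixed strategy MS derived from PS1 and PS2 such that $m_{MS}(X)\le m_{PS1}(X)$ for every initial population $X\in\mathcal{S}$ and $m_{MS}(X)<m_{PS1}(X)$ for some initial population $X\in\mathcal{S}$. Furthermore, (i) is also equivalent to: (iii) there exists a mixed strategy MS derived from PS1 and PS2 such that the expected runtime of MS is no more than that of PS1 for every initial population $X$, and strictly less than that of PS1 for some initial population $X$.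
   Context: A fitness function $f$ on a finite set is to be maximised; its optimal solutions are its maximisers. A metaheuristic generates a sequence of populations $\Phi_0,\Phi_1,\Phi_2,\dots$ (a population is a finite collection of candidate solutions). Let $\mathcal{S}$ be the finite set of all populations, $\mathcal{S}_{\mathrm{opt}}\subseteq\mathcal{S}$ the populations containing at least one optimal solution, and $\mathcal{S}_{\mathrm{non}}=\mathcal{S}\setminus\mathcal{S}_{\mathrm{opt}}$. The sequence is modelled as a time-homogeneous Markov chain on $\mathcal{S}$ with transition probabilities $P(X,Y)=\Pr(\Phi_{t+1}=Y\mid\Phi_t=X)$, in which every state of $\mathcal{S}_{\mathrm{opt}}$ is absorbing. The expected hitting time $m(X)\in[0,\infty]$ is the expected number of generations until the chain first enters $\mathcal{S}_{\mathrm{opt}}$ when $\Phi_0=X$ (so $m(X)=0$ for $X\in\mathcal{S}_{\mathrm{opt}}$). Each generation uses the same fixed number of fitness evaluations (the same for all algorithms compared), and the expected runtime (expected total number of fitness evaluations until an optimal solution is found) equals the expected hitting time times this number. A pure strategy is a transition matrix (independent of $t$) of this kind. Let PS1 and PS2 be pure strategies with transition matrices $P_1,P_2$ on the same $\mathcal{S}$ (with $\mathcal{S}_{\mathrm{opt}}$ absorbing for both), and expected hitting times $m_{PS1},m_{PS2}$. A mixed strategy MS derived from PS1 and PS2 assigns to each population $X$ probabilities $P_X(PS1)\in[0,1]$ and $P_X(PS2)=1-P_X(PS1)$; when the current population is $X$, PS1 is applied with probability $P_X(PS1)$ and PS2 otherwise, so MS has transition matrix $P_{MS}(X,Y)=P_X(PS1)P_1(X,Y)+P_X(PS2)P_2(X,Y)$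 and expected hitting time $m_{MS}$. With the distance function $d(X)=m_{PS1}(X)$, the drifts are defined for $X\in\mathcal{S}_{\mathrm{non}}$ by $\Delta_{PS1}(X)=d(X)-\sum_{Y\in\mathcal{S}_{\mathrm{non}}}P_1(X,Y)d(Y)$ and $\Delta_{PS2}(X)=d(X)-\sum_{Y\in\mathcal{S}_{\mathrm{non}}}P_2(X,Y)d(Y)$. *)

From HB Require Import structures.
From mathcomp Require Import all_boot all_order all_algebra.
From mathcomp Require Import all_classical all_reals ereal sequences.
Set Implicit Arguments. Unset Strict Implicit. Unset Printing Implicit Defensive.
Import Order.TTheory GRing.Theory Num.Theory.
Local Open Scope ring_scope.

Section Defs.
Variables (R : realType) (S : finType).

Definition stochastic (P : S -> S -> R) : Prop :=
  (forall X Y, 0 <= P X Y) /\ (forall X, \sum_(Y : S) P X Y = 1).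

Definition absorbing (opt : {set S}) (P : S -> S -> R) : Prop :=
  forall X, X \in opt -> P X X = 1.

(* notHit opt P t X = Pr(Phi_0,...,Phi_t all lie outside opt | Phi_0 = X)
   = Pr(T > t | Phi_0 = X), T the first hitting time of opt. *)
Fixpoint notHit (opt : {set S}) (P : S -> S -> R) (t : nat) (X : S) : R :=
  match t with
  | 0 => if X \in opt then 0 else 1
  | t'.+1 => if X \in opt then 0 else \sum_(Y : S) P X Y * notHit opt P t' Y
  end.

(* expected hitting time E[T | Phi_0 = X] = sum_{t>=0} Pr(T > t), in [0, +oo] *)
Definition hitting_time (opt : {set S}) (P : S -> S -> R) (X : S) : \bar R :=
  (\sum_(t <oo) (notHit opt P t X)%:E)%E.

(* expected runtime: c fitness evaluations per generation *)
Definition runtime (c : nat) (opt : {set S}) (P : S -> S -> R) (X : S) : \bar R :=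
  (hitting_time opt P X * (c%:R)%:E)%E.

Definition drift (opt : {set S}) (P : S -> S -> R) (d : S -> R) (X : S) : R :=
  d X - \sum_(Y in ~: opt) P X Y * d Y.

Definition mixed (p : S -> R) (P1 P2 : S -> S -> R) : S -> S -> R :=
  fun X Y => p X * P1 X Y + (1 - p X) * P2 X Y.

End Defs.

(* Write d = m_PS1.  Off the optimal set, d satisfies d = 1 + P1 d, i.e. its drift under PS1 is
   identically 1.  For any nonnegative kernel Q, the hitting time m_Q is the least nonnegative
   solution of h >= 1 + Q h off the optimal set; conversely a nonnegative function vanishing on
   the optimal set with d <= 1 + Q d stays below m_Q, since d <= (partial sums of m_Q) +
   (sum of d) Pr(T > n) and Pr(T > n) cannot stay bounded away from 0 when m_Q is finite.
   If Delta_PS2(X0) > 1, the mixture using PS2 only at X0 has d as a supersolution, strict at X0,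
   so it improves on PS1 at X0.  If Delta_PS2 <= 1 everywhere, d is a subsolution for every
   mixture, so no mixture beats PS1 anywhere.  Runtimes are hitting times times c > 0. *)

From mathcomp Require Import all_boot all_order all_algebra.
From mathcomp Require Import all_classical all_reals ereal sequences normedtype.
From mathcomp Require Import ring lra.
Import Order.TTheory GRing.Theory Num.Theory.
Local Open Scope ring_scope.
Set Implicit Arguments. Unset Strict Implicit.

Section HittingTime.
Variables (R : realType) (S : finType) (opt : {set S}) (Q : S -> S -> R).
Hypothesis Q_ge0 : forall X Y, 0 <= Q X Y.

Lemma notHit_ge0 t X : 0 <= notHit opt Q t X.
Proof.
elim: t X => [|t IH] X /=; case: ifP => // _.
by apply: sumr_ge0 => Y _; rewrite mulr_ge0.
Qed.

Definition hitting_partial n X := \sum_(0 <= t < n) notHit opt Q t X.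

Lemma hitting_partial0 X : hitting_partial 0 X = 0.
Proof. by rewrite /hitting_partial big_geq. Qed.

Lemma hitting_partialS n X : hitting_partial n.+1 X =
  if X \in opt then 0 else 1 + \sum_Y Q X Y * hitting_partial n Y.
Proof.
rewrite /hitting_partial big_nat_recl //=; case: ifP => HX.
  by rewrite add0r big1 // => t _; rewrite /= HX.
by rewrite exchange_big; congr (_ + _); apply: eq_bigr => Y _; rewrite mulr_sumr.
Qed.

Lemma hitting_partial_le n X : ((hitting_partial n X)%:E <= hitting_time opt Q X)%E.
Proof.
rewrite /hitting_time /hitting_partial -sumEFin.
by apply: nneseries_lim_ge => k _ _; rewrite lee_fin notHit_ge0.
Qed.

Lemma hitting_time_le_bound X b : (forall n, hitting_partial n X <= b) ->
  (hitting_time opt Q X <= b%:E)%E.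
Proof.
move=> Hb; apply: lime_le.
  by apply: is_cvg_nneseries => k _ _; rewrite lee_fin notHit_ge0.
by apply: nearW => n /=; rewrite sumEFin lee_fin; apply: Hb.
Qed.

Lemma hitting_time_ge0 X : (0 <= hitting_time opt Q X)%E.
Proof. by apply: nneseries_ge0 => k _ _; rewrite lee_fin notHit_ge0. Qed.

Lemma hitting_time_opt X : X \in opt -> hitting_time opt Q X = 0%E.
Proof.
by move=> HX; rewrite /hitting_time eseries0 // => -[|t] _ _ /=; rewrite HX.
Qed.

Lemma hitting_time_step X : X \notin opt ->
  hitting_time opt Q X = (1 + \sum_Y (Q X Y)%:E * hitting_time opt Q Y)%E.
Proof.
move=> HX; rewrite /hitting_time nneseries_recl //; last first.
  by move=> k _; rewrite lee_fin notHit_ge0.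
rewrite /= (negbTE HX); congr (_ + _)%E.
rewrite -nneseries_addn; last by move=> t; rewrite lee_fin notHit_ge0.
under eq_eseriesr => t _ do rewrite addn1 /= (negbTE HX) -sumEFin.
rewrite nneseries_sum; last by move=> Y t _; rewrite lee_fin mulr_ge0 ?notHit_ge0.
apply: eq_bigr => Y _; under eq_eseriesr => t _ do rewrite EFinM.
by rewrite nneseriesZl // => t _; rewrite lee_fin notHit_ge0.
Qed.

Variable d : S -> R.
Hypothesis d_ge0 : forall X, 0 <= d X.

Section Supersolution.
Hypothesis d_super : forall X, X \notin opt -> 1 + \sum_Y Q X Y * d Y <= d X.

Lemma hitting_partial_le_super n X : hitting_partial n X <= d X.
Proof.
elim: n X => [|n IH] X; first by rewrite hitting_partial0.
rewrite hitting_partialS; case: ifPn => // HX.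
apply: le_trans (d_super HX); rewrite lerD2l; apply: ler_sum => Y _.
by rewrite ler_wpM2l.
Qed.

Lemma hitting_time_le_super X : (hitting_time opt Q X <= (d X)%:E)%E.
Proof. by apply: hitting_time_le_bound => n; apply: hitting_partial_le_super. Qed.

Lemma hitting_time_lt_super X : X \notin opt ->
  1 + \sum_Y Q X Y * d Y < d X -> (hitting_time opt Q X < (d X)%:E)%E.
Proof.
move=> HX Hlt; rewrite -lte_fin in Hlt; apply: le_lt_trans Hlt.
rewrite hitting_time_step //.
rewrite EFinD -sumEFin leeD2l //; apply: lee_sum => Y _.
by rewrite EFinM lee_wpmul2l ?lee_fin ?hitting_time_le_super.
Qed.

End Supersolution.

Section Subsolution.
Hypothesis d_opt : forall X, X \in opt -> d X = 0.
Hypothesis d_sub : forall X, X \notin opt -> d X <= 1 + \sum_Y Q X Y * d Y.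

Let M := \sum_Y d Y.

(* [M * notHit n X] bounds the expected value of [d] at time [n] on the event [T > n]. *)
Lemma sub_le_partial n X : d X <= hitting_partial n X + M * notHit opt Q n X.
Proof.
elim: n X => [|n IH] X.
  rewrite hitting_partial0 add0r /=; case: ifPn => HX; first by rewrite d_opt ?mulr0.
  by rewrite mulr1 /M (bigD1 X) //= lerDl sumr_ge0.
rewrite hitting_partialS /=; case: ifPn => HX; first by rewrite d_opt // mulr0 addr0.
apply: le_trans (d_sub HX) _; rewrite -addrA lerD2l mulr_sumr -big_split /=.
by apply: ler_sum => Y _; rewrite mulrCA -mulrDr ler_wpM2l.
Qed.

Lemma sub_le_hitting_time X : ((d X)%:E <= hitting_time opt Q X)%E.
Proof.
have := hitting_time_ge0 X; have := hitting_partial_le^~ X.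
case: (hitting_time opt Q X) => [r Hr r_ge0| *|//]; last exact: leey.
rewrite lee_fin leNgt; apply/negP => r_lt.
have HX : X \notin opt by apply: contraTN r_lt => /d_opt ->; rewrite -leNgt -lee_fin.
have del_gt0 : 0 < d X - r by rewrite subr_gt0.
have Hdel n : d X - r <= M * notHit opt Q n X.
  rewrite lerBlDl; apply: le_trans (sub_le_partial n X) _.
  by rewrite lerD2r -lee_fin; apply: Hr.
have M_gt0 : 0 < M by have := Hdel 0%N; rewrite /= (negbTE HX) mulr1; apply: lt_le_trans.
(* Pr(T > t) >= (d X - r) / M for every t, so the partial sums grow linearly. *)
have Hlin n : n%:R * (d X - r) <= M * r.
  apply: le_trans (_ : M * hitting_partial n X <= _); last first.
    by rewrite ler_wpM2l ?(ltW M_gt0) // -lee_fin; apply: Hr.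
  rewrite /hitting_partial mulr_sumr -[n in n%:R](subn0 n) -sumr_const_nat mulr_suml.
  by apply: ler_sum => t _; rewrite mul1r.
have K_ge0 : 0 <= M * r / (d X - r) by rewrite divr_ge0 ?mulr_ge0 ?(ltW M_gt0) ?(ltW del_gt0) //.
have := archi_boundP K_ge0; rewrite ltr_pdivrMr // ltNge.
by rewrite Hlin.
Qed.

End Subsolution.

End HittingTime.

Section Mixed.
Variables (R : realType) (S : finType) (P1 P2 : S -> S -> R) (p : S -> R).
Hypotheses (P1_ge0 : forall X Y, 0 <= P1 X Y) (P2_ge0 : forall X Y, 0 <= P2 X Y).
Hypothesis p01 : forall X, 0 <= p X <= 1.

Lemma mixed_ge0 X Y : 0 <= mixed p P1 P2 X Y.
Proof.
have /andP[p_ge0 p_le1] := p01 X.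
by rewrite addr_ge0 ?mulr_ge0 ?subr_ge0.
Qed.

Lemma mixed_sum (d : S -> R) X : \sum_Y mixed p P1 P2 X Y * d Y =
  p X * \sum_Y P1 X Y * d Y + (1 - p X) * \sum_Y P2 X Y * d Y.
Proof.
by rewrite !mulr_sumr -big_split; apply: eq_bigr => Y _; rewrite mulrDl !mulrA.
Qed.

End Mixed.

Section Dominates.
Variables (R : realType) (S : finType).

Definition dominates (f g : S -> \bar R) :=
  (forall X, (f X <= g X)%E) /\ exists X, (f X < g X)%E.

Lemma dominates_scale (k : R) (f g : S -> \bar R) : 0 < k ->
  dominates (fun X => f X * k%:E)%E (fun X => g X * k%:E)%E <-> dominates f g.
Proof.
move=> k_gt0; have k_fin : k%:E \is a fin_num by [].
have kE : (0 < k%:E)%E by rewrite lte_fin.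
rewrite /dominates; under eq_forall do rewrite lee_pmul2r //.
by under eq_exists do rewrite lte_pmul2r //.
Qed.

End Dominates.

Section Complementary.
Variables (R : realType) (S : finType) (opt : {set S}) (P1 P2 : S -> S -> R).
Hypotheses (P1_ge0 : forall X Y, 0 <= P1 X Y) (P2_ge0 : forall X Y, 0 <= P2 X Y).
Hypothesis P1_fin : forall X, hitting_time opt P1 X \is a fin_num.

Let d X := fine (hitting_time opt P1 X).

Let dE X : hitting_time opt P1 X = (d X)%:E.
Proof. by rewrite /d fineK. Qed.

Let d_ge0 X : 0 <= d X.
Proof. by rewrite -lee_fin -dE hitting_time_ge0. Qed.

Let d_opt X : X \in opt -> d X = 0.
Proof. by move=> HX; apply: EFin_inj; rewrite -dE hitting_time_opt. Qed.

Let d_step X : X \notin opt -> d X = 1 + \sum_Y P1 X Y * d Y.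
Proof.
move=> HX; apply: EFin_inj; rewrite -dE hitting_time_step // EFinD -sumEFin.
by congr (_ + _)%E; apply: eq_bigr => Y _; rewrite dE EFinM.
Qed.

Let drift_sum (P : S -> S -> R) X : drift opt P d X = d X - \sum_Y P X Y * d Y.
Proof.
congr (_ - _); rewrite [RHS](bigID (fun Y => Y \in ~: opt)) /= [s in _ = _ + s]big1 ?addr0 //.
by move=> Y; rewrite inE negbK => /d_opt ->; rewrite mulr0.
Qed.

Let drift1 X : X \notin opt -> drift opt P1 d X = 1.
Proof. by move=> HX; rewrite drift_sum {1}(d_step HX) addrK. Qed.

Lemma complementary_improving_mixture X0 : X0 \notin opt ->
  drift opt P1 d X0 < drift opt P2 d X0 ->
  let p X := if X == X0 then 0 else 1 in
  dominates (hitting_time opt (mixed p P1 P2)) (hitting_time opt P1).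
Proof.
move=> HX0 Hlt p; set Q := mixed p P1 P2.
have QE X Y : Q X Y = if X == X0 then P2 X Y else P1 X Y.
  by rewrite /Q /mixed /p; case: eqP => _; rewrite ?subr0 ?subrr; ring.
have Q_ge0 X Y : 0 <= Q X Y by rewrite QE; case: eqP.
have Q_X0 : 1 + \sum_Y Q X0 Y * d Y < d X0.
  by under eq_bigr do rewrite QE eqxx; move: Hlt; rewrite drift1 // drift_sum; lra.
have d_super X : X \notin opt -> 1 + \sum_Y Q X Y * d Y <= d X.
  move=> HX; have [->|HXX0] := eqVneq X X0; first exact: ltW.
  by under eq_bigr do rewrite QE (negbTE HXX0); rewrite -d_step.
split; last by exists X0; rewrite dE hitting_time_lt_super.
by move=> X; rewrite dE hitting_time_le_super.
Qed.

Lemma mixture_not_improving p : (forall X, 0 <= p X <= 1) ->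
  (forall X, X \notin opt -> drift opt P2 d X <= drift opt P1 d X) ->
  forall X, (hitting_time opt P1 X <= hitting_time opt (mixed p P1 P2) X)%E.
Proof.
move=> p01 Hdrift X; rewrite dE; apply: sub_le_hitting_time => //.
  exact: mixed_ge0.
move=> {}X HX; rewrite mixed_sum //.
have /andP[p_ge0 p_le1] := p01 X.
have := Hdrift X HX; rewrite drift1 // drift_sum; have := d_step HX.
set s1 := \sum_Y P1 X Y * d Y; set s2 := \sum_Y P2 X Y * d Y => H1 H2.
apply: le_trans (_ : d X <= 1 + (p X * s1 + (1 - p X) * s1)) _.
  by rewrite -mulrDl subrKC mul1r H1.
by rewrite !lerD2l; apply: ler_wpM2l; lra.
Qed.

Lemma complementary_iff_improving_mixture :
  (exists X, X \notin opt /\ drift opt P1 d X < drift opt P2 d X) <->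
  exists p : S -> R, (forall X, 0 <= p X <= 1) /\
    dominates (hitting_time opt (mixed p P1 P2)) (hitting_time opt P1).
Proof.
split=> [[X0 [HX0 Hlt]] | [p [p01 [_ [X Hlt]]]]].
  exists (fun X => if X == X0 then 0 else 1); split.
    by move=> X; case: eqP; rewrite lexx ler01.
  exact: complementary_improving_mixture.
apply: contrapT => Hnot; move: Hlt; rewrite ltNge mixture_not_improving // => Y HY.
by rewrite leNgt; apply/negP => Hlt; apply: Hnot; exists Y.
Qed.

End Complementary.

Theorem mainTheorem1 (R : realType) (S : finType) (opt : {set S})
    (P1 P2 : S -> S -> R) (c : nat) :
  stochastic P1 -> stochastic P2 ->
  absorbing opt P1 -> absorbing opt P2 ->
  (forall X, hitting_time opt P1 X \is a fin_num) ->
  (0 < c)%N ->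
  let d := fun X => fine (hitting_time opt P1 X) in
  ((exists X, X \notin opt /\ drift opt P1 d X < drift opt P2 d X) <->
   (exists p : S -> R, (forall X, 0 <= p X <= 1) /\
      (forall X, (hitting_time opt (mixed p P1 P2) X <= hitting_time opt P1 X)%E) /\
      (exists X, (hitting_time opt (mixed p P1 P2) X < hitting_time opt P1 X)%E)))
  /\
  ((exists X, X \notin opt /\ drift opt P1 d X < drift opt P2 d X) <->
   (exists p : S -> R, (forall X, 0 <= p X <= 1) /\
      (forall X, (runtime c opt (mixed p P1 P2) X <= runtime c opt P1 X)%E) /\
      (exists X, (runtime c opt (mixed p P1 P2) X < runtime c opt P1 X)%E))).
Proof.
move=> [P1_ge0 _] [P2_ge0 _] _ _ P1_fin c_gt0 d.
have hitting_iff := complementary_iff_improving_mixture P1_ge0 P2_ge0 P1_fin.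
split; first exact: hitting_iff.
apply: iff_trans hitting_iff _.
have c_pos : 0 < c%:R :> R by rewrite ltr0n.
split=> -[p [p01 dom]]; exists p; split=> //;
  have := dominates_scale (hitting_time opt (mixed p P1 P2)) (hitting_time opt P1) c_pos.
  by move=> [_]; apply.
by move=> [+ _]; apply.
Qed.
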